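(* Let $V$ be a finite nonempty set and $f:\{0,1\}^V\to\{0,1\}^V$ be non-expansive. (1) If for every $1\le k\le |V|$ there are at most $2^k-1$ points $x\in\{0,1\}^V$ such that $Gf(x)$ has a chordless positive cycle of length $k$, then $f$ has at most one fixed point. (2) If for every $1\le k\le |V|$ there are at most $2^k-1$ points $x\in\{0,1\}^V$ such that $Gf(x)$ has a chordless negative cycle of length $k$, then $f$ has at least one fixed point.
   Context: $d$ is the Hamming distance; $f$ is non-expansive if $d(f(x),f(y))\le d(x,y)$ for all $x,y$. For $x^{j\alpha}$ the point equal to $x$ except its $j$-component is $\alpha$, the local interaction graph $Gf(x)$ is the signed digraph on $V$ with a positive arc from $j$ to $i$ if $f_i(x^{j1})-f_i(x^{j0})=1$ and a negative arc if it equals $-1$ (loops allowed). A cycle of a signed digraph $G$ is a subgraph whose underlying unsigned digraph is a directed cycle (length = number of arcs); it is positive (negative) if it has an even (odd) number of negative arcs; it is chordless if its underlying unsigned digraph is an induced subgraph of the underlying unsigned digraph of $G$. *)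

From mathcomp Require Import all_boot.
Set Implicit Arguments. Unset Strict Implicit. Unset Printing Implicit Defensive.

(* Points of {0,1}^V are finite functions V -> bool (true = 1, false = 0). *)
Notation point V := {ffun V -> bool}.

Definition hamming (V : finType) (x y : point V) : nat := #|[set i | x i != y i]|.

Definition nonexpansive (V : finType) (f : point V -> point V) : Prop :=
  forall x y, hamming (f x) (f y) <= hamming x y.

Definition flip (V : finType) (x : point V) (j : V) (a : bool) : point V :=
  [ffun i => if i == j then a else x i].

(* positive arc j -> i in Gf(x): f_i(x^{j1}) - f_i(x^{j0}) = 1 *)
Definition arc_pos (V : finType) (f : point V -> point V) (x : point V) (j i : V) : bool :=
  f (flip x j true) i && ~~ f (flip x j false) i.
(* negative arc j -> i in Gf(x): f_i(x^{j1}) - f_i(x^{j0}) = -1 *)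
Definition arc_neg (V : finType) (f : point V -> point V) (x : point V) (j i : V) : bool :=
  ~~ f (flip x j true) i && f (flip x j false) i.
Definition arc (V : finType) (f : point V -> point V) (x : point V) (j i : V) : bool :=
  arc_pos f x j i || arc_neg f x j i.

(* A cycle of length k is given by a duplicate-free sequence c = [v_0;..;v_{k-1}]
   with arcs v_t -> v_{t+1 mod k} (next c v is the cyclic successor).  Its sign is the parity of the number of negative arcs. *)
Definition chordless_cycle (V : finType) (f : point V -> point V) (x : point V)
  (c : seq V) : bool :=
  [&& uniq c, cycle (arc f x) c &
      [forall u, forall v, (u \in c) && (v \in c) && arc f x u v ==> (v == next c u)]].

Definition num_neg_arcs (V : finType) (f : point V -> point V) (x : point V)
  (c : seq V) : nat := count (fun v => arc_neg f x v (next c v)) c.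

Definition has_chordless_pos_cycle (V : finType) (f : point V -> point V)
  (x : point V) (k : nat) : bool :=
  [exists c : k.-tuple V, chordless_cycle f x c && ~~ odd (num_neg_arcs f x c)].

Definition has_chordless_neg_cycle (V : finType) (f : point V -> point V)
  (x : point V) (k : nat) : bool :=
  [exists c : k.-tuple V, chordless_cycle f x c && odd (num_neg_arcs f x c)].

(* Let x <> y be points whose coordinates in J are fixed by a non-expansive
   map h, chosen so that no point x^S (x with the coordinates of S negated,
   S a subset of the set I where x and y differ) other than x and y is fixed
   on J.  Comparing h(x^S) with x and with y, non-expansiveness shows that
   S |-> {i in J | h_i(x^S) <> x_i} preserves cardinality and inclusion on
   subsets of I, so it is S |-> pi(S) for a permutation pi of I, and the
   minimality makes pi cyclic.  Hence at each of the 2^|I| points x^S the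
   arcs of Gh(x^S) starting in I are exactly u -> pi u: a chordless cycle of
   length |I|.  If h is f with the components in T negated, the arcs of f
   are those of h, and the cycle has sign (-1)^|I inter T|.

   (1) Two fixed points of f give such a pair with J = V and T empty, hence
   2^k points with a chordless positive k-cycle.  (2) If f has no fixed
   point, take a subcube {z | z = p outside J} of minimal dimension without
   a point fixed on J, and v in J.  Negating f_v, the minimal subcubes with
   v frozen yield points fixed on J with either value at v; a closest such
   pair separated at v gives, with T = {v}, 2^k points with a chordless
   negative k-cycle. *)

From mathcomp Require Import all_boot zify.

Set Implicit Arguments. Unset Strict Implicit. Unset Printing Implicit Defensive.

Section Cube.
Variable V : finType.
Implicit Types (x y z a b p : point V) (S T J : {set V}) (h f : point V -> point V) (u w : V).

Definition diffset x y : {set V} := [set i | x i != y i].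

Definition flipset x S : point V := [ffun i => if i \in S then ~~ x i else x i].

Definition twist f T : point V -> point V := fun z => flipset (f z) T.

Definition fixed_on h J z : bool := [forall i in J, h z i == z i].

Definition subcube J p z : bool := [forall i in ~: J, z i == p i].

Lemma hammingE x y : hamming x y = #|diffset x y|.
Proof. by []. Qed.

Lemma diffsetC x y : diffset x y = diffset y x.
Proof. by apply/setP => i; rewrite !inE eq_sym. Qed.

Lemma diffset_eq0 x y : (diffset x y == set0) = (x == y).
Proof.
apply/eqP/eqP => [xy0 | ->]; last by apply/setP => i; rewrite !inE eqxx.
apply/ffunP => i; apply/eqP; apply: contraFT (in_set0 i) => xyi.
by rewrite -xy0 inE.
Qed.

Lemma diffset_flipset x S : diffset x (flipset x S) = S.
Proof. by apply/setP => i; rewrite !inE ffunE; case: (i \in S); case: (x i). Qed.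

Lemma flipset_diffset x y : flipset x (diffset x y) = y.
Proof. by apply/ffunP => i; rewrite ffunE inE; case: (x i); case: (y i). Qed.

Lemma flipset_inj x : injective (flipset x).
Proof. by move=> S T eST; rewrite -(diffset_flipset x S) eST diffset_flipset. Qed.

Lemma hamming_flipset x S T : S \subset T ->
  hamming (flipset x S) (flipset x T) = #|T :\: S|.
Proof.
move=> /subsetP sST; apply: eq_card => i; rewrite !inE !ffunE.
case iS: (i \in S); first by rewrite (sST _ iS) eqxx.
by case: (i \in T); case: (x i).
Qed.

Lemma flip_flipset_out x S u : flip (flipset x S) u (~~ x u) = flipset x (u |: S).
Proof. by apply/ffunP => i; rewrite !ffunE !inE; case: eqP => [->|]. Qed.

Lemma flip_flipset_in x S u : flip (flipset x S) u (x u) = flipset x (S :\ u).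
Proof. by apply/ffunP => i; rewrite !ffunE !inE; case: eqP => [->|]. Qed.

Lemma card_flipset_points x S (P : pred (point V)) :
  (forall T, T \subset S -> P (flipset x T)) -> 2 ^ #|S| <= #|[set z | P z]|.
Proof.
move=> PS; rewrite -card_powerset -(card_imset _ (@flipset_inj x)).
apply/subset_leq_card/subsetP => z /imsetP[T]; rewrite powersetE => TS ->.
by rewrite inE PS.
Qed.

Lemma twist_neq f T a b i : (twist f T a i != twist f T b i) = (f a i != f b i).
Proof. by rewrite !ffunE; case: (i \in T); case: (f a i); case: (f b i). Qed.

Lemma diffset_twist f T a b : diffset (twist f T a) (twist f T b) = diffset (f a) (f b).
Proof. by apply/setP => i; rewrite !inE twist_neq. Qed.

Lemma nonexpansive_twist f T : nonexpansive f -> nonexpansive (twist f T).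
Proof. by move=> f_nonexp a b; rewrite hammingE diffset_twist; apply: f_nonexp. Qed.

Lemma fixed_onP h J z : reflect {in J, forall i, h z i = z i} (fixed_on h J z).
Proof. by apply: (iffP forall_inP) => hJ i /hJ /eqP. Qed.

Lemma fixed_onT h z : fixed_on h setT z = (h z == z).
Proof.
apply/fixed_onP/eqP => [hz | -> //]; apply/ffunP => i; exact: hz.
Qed.

Lemma fixed_on_twist0 f J z : fixed_on (twist f set0) J z = fixed_on f J z.
Proof. by apply: eq_forallb => i; rewrite ffunE inE. Qed.

Lemma subcubeP J p z : reflect (forall i, i \notin J -> z i = p i) (subcube J p z).
Proof.
by apply: (iffP forall_inP) => zJ i iJ; apply/eqP/zJ; rewrite ?inE in iJ *.
Qed.

Lemma subcubeT p z : subcube setT p z.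
Proof. by apply/subcubeP => i; rewrite inE. Qed.

Lemma diffset_subcube J p x y :
  subcube J p x -> subcube J p y -> diffset x y \subset J.
Proof.
move=> /subcubeP xJ /subcubeP yJ; apply/subsetP => i; rewrite inE.
by apply: contraR => iJ; rewrite xJ ?yJ.
Qed.

Lemma subcube_flipset J p x S :
  subcube J p x -> S \subset J -> subcube J p (flipset x S).
Proof.
move=> /subcubeP xJ /subsetP SJ; apply/subcubeP => i iJ.
by rewrite ffunE xJ //; case: ifP => // /SJ; rewrite (negbTE iJ).
Qed.

Lemma arcE f z u w :
  arc f z u w = (f (flip z u true) w != f (flip z u false) w).
Proof. by rewrite /arc /arc_pos /arc_neg; case: (f _ w); case: (f _ w). Qed.

Lemma arc_negE f z u w :
  arc f z u w -> arc_neg f z u w = f (flip z u false) w.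
Proof. by rewrite /arc /arc_pos /arc_neg; case: (f _ w); case: (f _ w). Qed.

Definition has_chordless_cycle f z (k : nat) (b : bool) : bool :=
  [exists c : k.-tuple V, chordless_cycle f z c && (odd (num_neg_arcs f z c) == b)].

Lemma chordless_pos_cycle_points f k :
  [set z | has_chordless_cycle f z k false] = [set z | has_chordless_pos_cycle f z k].
Proof. by apply/setP => z; rewrite !inE; apply: eq_existsb => c; rewrite eqbF_neg. Qed.

Lemma chordless_neg_cycle_points f k :
  [set z | has_chordless_cycle f z k true] = [set z | has_chordless_neg_cycle f z k].
Proof. by apply/setP => z; rewrite !inE; apply: eq_existsb => c; rewrite eqb_id. Qed.

Definition minimal_pair h J x y : Prop :=
  [/\ x != y, diffset x y \subset J, fixed_on h J x, fixed_on h J y &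
      forall S, S \subset diffset x y -> fixed_on h J (flipset x S) ->
        S = set0 \/ S = diffset x y].

End Cube.

Section MinimalPair.
Variables (V : finType) (h : point V -> point V) (J : {set V}) (x y : point V).
Hypotheses (h_nonexp : nonexpansive h) (xy_min : minimal_pair h J x y).

Implicit Types (S T : {set V}) (u w : V).

Local Notation I := (diffset x y).

Let IJ : I \subset J. Proof. by case: xy_min. Qed.
Let hx : {in J, forall i, h x i = x i}. Proof. by case: xy_min => _ _ /fixed_onP. Qed.
Let hy : {in J, forall i, h y i = y i}. Proof. by case: xy_min => _ _ _ /fixed_onP. Qed.

Definition moved S : {set V} := [set i in J | h (flipset x S) i != x i].

Lemma moved_sub_card S : S \subset I -> moved S \subset I /\ #|moved S| = #|S|.
Proof.
move=> SI; pose B := [set i in J | h (flipset x S) i != y i].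
have le_moved : #|moved S| <= #|S|.
  rewrite -{2}(diffset_flipset x S) diffsetC; apply: leq_trans (h_nonexp _ _).
  by apply/subset_leq_card/subsetP => i; rewrite !inE => /andP[/hx ->].
have le_B : #|B| <= #|I :\: S|.
  rewrite -(hamming_flipset x SI) flipset_diffset; apply: leq_trans (h_nonexp _ _).
  by apply/subset_leq_card/subsetP => i; rewrite !inE => /andP[/hy ->].
(* Every coordinate of [I] is moved away from [x] or from [y], while
   nonexpansiveness bounds these two sets by [#|S|] and [#|I :\: S|]. *)
have I_sub : I \subset moved S :|: B.
  apply/subsetP => i iI; rewrite !inE (subsetP IJ i iI) /=; move: iI; rewrite inE.
  by case: (h _ i); case: (x i); case: (y i).
have cardI : #|I| = #|S| + #|I :\: S| by rewrite -(cardsID S I) (setIidPr SI).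
have movedB0 : moved S :&: B = set0.
  apply/eqP; rewrite -cards_eq0; have := cardsUI (moved S) B.
  have := subset_leq_card I_sub; lia.
split; last by have := cardsUI (moved S) B; have := subset_leq_card I_sub; lia.
apply/subsetP => i iM; apply: contraT => iI; rewrite -(in_set0 i) -movedB0.
move: iM iI; rewrite !inE => /andP[-> hxi]; rewrite negbK => /eqP <-.
by rewrite hxi.
Qed.

Lemma moved_mono S T : S \subset T -> T \subset I -> moved S \subset moved T.
Proof.
move=> ST TI; have [_ cardS] := moved_sub_card (subset_trans ST TI).
have [_ cardT] := moved_sub_card TI.
have le_symdiff : #|moved S :\: moved T| + #|moved T :\: moved S| <= #|T :\: S|.
  rewrite -(hamming_flipset x ST); apply: leq_trans (h_nonexp _ _).
  have disj : (moved S :\: moved T) :&: (moved T :\: moved S) = set0.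
    apply/setP => i; rewrite in_setI !in_setD in_set0.
    by case: (i \in moved S); case: (i \in moved T).
  rewrite -cardsUI disj cards0 addn0; apply/subset_leq_card/subsetP => i; rewrite !inE.
  by case: (i \in J); case: (h _ i); case: (h _ i); case: (x i).
have := cardsID (moved T) (moved S); have := cardsID (moved S) (moved T).
rewrite setIC.
have := cardsID S T; rewrite (setIidPr ST) => *.
by rewrite -setD_eq0 -cards_eq0; lia.
Qed.

Lemma moved_id S : S \subset I -> moved S = S -> S = set0 \/ S = I.
Proof.
move=> SI movedS; case: xy_min => _ _ _ _; apply => //; apply/fixed_onP => i iJ.
have [movedI _] := moved_sub_card SI.
rewrite [RHS]ffunE; case iS: (i \in S).
- by move: iS; rewrite -{1}movedS inE iJ; case: (h _ i); case: (x i).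
- have : i \notin moved S by rewrite movedS iS.
  by rewrite inE iJ negbK => /eqP.
Qed.

(* The defaults are never used on [I], where [moved [set u]] is a singleton. *)
Definition pi u := if u \in I then odflt u [pick w in moved [set u]] else u.

Lemma moved1 u : u \in I -> moved [set u] = [set pi u].
Proof.
move=> uI; have [_] := moved_sub_card (S := [set u]) ltac:(by rewrite sub1set).
rewrite cards1 => /eqP /cards1P [w movedw].
rewrite /pi uI movedw; case: pickP => [w' | /(_ w)]; rewrite inE ?eqxx //.
by move=> /eqP ->.
Qed.

Lemma pi_out u : u \notin I -> pi u = u.
Proof. by rewrite /pi => /negbTE ->. Qed.

Lemma pi_in u : u \in I -> pi u \in I.
Proof.
move=> uI; have [movedI _] := moved_sub_card (S := [set u]) ltac:(by rewrite sub1set).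
by apply: (subsetP movedI); rewrite moved1 ?set11.
Qed.

Lemma imset_pi_sub S : S \subset I -> pi @: S \subset moved S.
Proof.
move=> SI; apply/subsetP => _ /imsetP[u uS ->].
have uI := subsetP SI u uS.
apply: (subsetP (moved_mono (S := [set u]) _ SI)); first by rewrite sub1set.
by rewrite moved1 ?set11.
Qed.

Lemma pi_irreducible S : S \subset I -> S != set0 -> pi @: S \subset S -> S = I.
Proof.
move=> SI; elim: {S}#|S| {-2}S (leqnn #|S|) SI => [|n IHn] S.
  by rewrite leqn0 cards_eq0 => /eqP ->; rewrite eqxx.
move=> le_Sn SI S0 piS; case: (eqVneq (pi @: S) S) => [piSS | piSS].
  have movedS : moved S = S.
    apply/eqP; rewrite eq_sym eqEcard -{1}piSS imset_pi_sub //=.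
    by have [_ ->] := moved_sub_card SI.
  by case: (moved_id SI movedS) => // S0'; rewrite S0' eqxx in S0.
have lt_piS : #|pi @: S| < #|S|.
  rewrite ltn_neqAle leq_imset_card andbT; apply: contra piSS => /eqP cardS.
  by rewrite eqEcard piS cardS leqnn.
have le_piS_n : #|pi @: S| <= n by lia.
have piS0 : pi @: S != set0.
  by case/set0Pn: S0 => u uS; apply/set0Pn; exists (pi u); rewrite imset_f.
have piSI := IHn _ le_piS_n (subset_trans piS SI) piS0 (imsetS _ piS).
by have := subset_leq_card SI; rewrite -piSI; lia.
Qed.

Lemma diffset_neq0 : I != set0.
Proof. by rewrite diffset_eq0; case: xy_min. Qed.

Lemma imset_pi : pi @: I = I.
Proof.
have piI : pi @: I \subset I by apply/subsetP => _ /imsetP[u /pi_in uI ->].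
apply: pi_irreducible => //; last exact: imsetS.
by case/set0Pn: diffset_neq0 => u uI; apply/set0Pn; exists (pi u); rewrite imset_f.
Qed.

Lemma pi_inj : injective pi.
Proof.
have injI : {in I &, injective pi} by apply/imset_injP; rewrite imset_pi.
move=> u w; case: (boolP (u \in I)) => uI; case: (boolP (w \in I)) => wI.
- exact: injI.
- by rewrite (pi_out wI) => piuw; move: (pi_in uI); rewrite piuw (negbTE wI).
- by rewrite (pi_out uI) => piuw; move: (pi_in wI); rewrite -piuw (negbTE uI).
- by rewrite (pi_out uI) (pi_out wI).
Qed.

Lemma moved_imset S : S \subset I -> moved S = pi @: S.
Proof.
move=> SI; apply/esym/eqP; rewrite eqEcard imset_pi_sub // card_imset /=; last exact: pi_inj.
by have [_ ->] := moved_sub_card SI.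
Qed.

Lemma h_flipset_pi S u : S \subset I -> u \in I ->
  h (flipset x (u |: S)) (pi u) = ~~ x (pi u) /\ h (flipset x (S :\ u)) (pi u) = x (pi u).
Proof.
move=> SI uI; have piuJ := subsetP IJ _ (pi_in uI).
have uSI : u |: S \subset I by rewrite subUset sub1set uI.
have SuI : S :\ u \subset I := subset_trans (subD1set S u) SI.
have : pi u \in moved (u |: S) by rewrite moved_imset // imset_f ?setU11.
have : pi u \notin moved (S :\ u).
  by rewrite moved_imset //; apply/imsetP => -[w wS /pi_inj wu]; rewrite -wu setD11 in wS.
rewrite !inE piuJ /= negbK => /eqP -> hout; split=> //.
by move: hout; case: (h _ (pi u)); case: (x (pi u)).
Qed.

Lemma arcs_flipset S u : S \subset I -> u \in I ->
  (forall w, (h (flip (flipset x S) u true) w != h (flip (flipset x S) u false) w)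
               = (w == pi u))
  /\ h (flip (flipset x S) u (~~ x u)) (pi u) = ~~ x (pi u).
Proof.
move=> SI uI; have [h_out h_in] := h_flipset_pi SI uI.
rewrite flip_flipset_out; split => // w.
have uS_Su : (u |: S) :\: (S :\ u) = [set u].
  by apply/setP => i; rewrite !inE; case: eqP => //= _; case: (i \in S).
have diff_pi : diffset (h (flipset x (S :\ u))) (h (flipset x (u |: S))) = [set pi u].
  apply/eqP; rewrite eq_sym eqEcard sub1set inE h_out h_in cards1.
  rewrite (_ : x (pi u) != ~~ x (pi u)) /=; last by case: (x (pi u)).
  apply: leq_trans (h_nonexp _ _) _.
  by rewrite hamming_flipset ?uS_Su ?cards1 // (subset_trans (subD1set S u)) ?subsetUr.
have flips : (flip (flipset x S) u true, flip (flipset x S) u false)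
  = if x u then (flipset x (S :\ u), flipset x (u |: S))
    else (flipset x (u |: S), flipset x (S :\ u)).
  by rewrite -flip_flipset_out -flip_flipset_in; case: (x u).
move/setP/(_ w): diff_pi; rewrite !inE => <-.
by case: (x u) flips => -[-> ->]; rewrite // eq_sym.
Qed.
End MinimalPair.

Lemma count_next (T : eqType) (c : seq T) (a : pred T) :
  uniq c -> count (fun v => a (next c v)) c = count a c.
Proof.
move=> uc; rewrite -[LHS]/(count (preim (next c) a) c) -count_map; apply/permP.
apply: uniq_perm => //; first by rewrite (map_inj_uniq (can_inj (prev_next uc))).
move=> w; apply/mapP/idP => [[v vc ->] | wc]; first by rewrite mem_next.
by exists (prev c w); rewrite ?mem_prev // next_prev.
Qed.

Lemma odd_count_addb (T : Type) (a b : pred T) (s : seq T) :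
  odd (count (fun v => a v (+) b v) s) = odd (count a s) (+) odd (count b s).
Proof.
elim: s => //= v s IHs; rewrite !oddD IHs.
by case: (a v); case: (b v); case: (odd (count a s)); case: (odd (count b s)).
Qed.

Lemma odd_count_next_addb (T : eqType) (c : seq T) (a b : pred T) : uniq c ->
  odd (count (fun v => a v (+) a (next c v) (+) b (next c v)) c) = odd (count b c).
Proof.
move=> uc; rewrite odd_count_addb (odd_count_addb a) !count_next //.
by rewrite addbb.
Qed.

Lemma orbit_irreducible (V : finType) (pi : V -> V) (I : {set V}) u :
  {in I, forall v, pi v \in I} ->
  (forall S : {set V}, S \subset I -> S != set0 -> pi @: S \subset S -> S = I) ->
  u \in I -> orbit pi u =i I.
Proof.
move=> piI irr uI.
have orbitI : {subset orbit pi u <= I}.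
  by move=> w /trajectP[i _ ->]; elim: i => //= i; apply: piI.
suff <- : [set w in orbit pi u] = I by move=> w; rewrite inE.
apply: irr; first by apply/subsetP => w; rewrite inE => /orbitI.
  by apply/set0Pn; exists u; rewrite inE in_orbit.
by apply/subsetP => w /imsetP[v]; rewrite !inE => /mem_orbit vu ->.
Qed.

Lemma chordless_cycle_orbit (V : finType) (f : point V -> point V) z (pi : V -> V) u :
  injective pi -> (forall v w, v \in orbit pi u -> arc f z v w = (w == pi v)) ->
  chordless_cycle f z (orbit pi u).
Proof.
move=> pi_inj arcs; have nextE := nextE (cycle_orbit pi_inj u).
rewrite /chordless_cycle orbit_uniq /=; apply/andP; split.
  by apply: cycle_from_next => // v vu; rewrite nextE // arcs ?eqxx.
apply/forallP => v; apply/forallP => w; apply/implyP => /andP[/andP[vu _]].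
by rewrite arcs // nextE.
Qed.

Section TwistedMinimalPair.
Variables (V : finType) (f : point V -> point V) (T J : {set V}) (x y : point V).
Hypotheses (f_nonexp : nonexpansive f) (xy_min : minimal_pair (twist f T) J x y).
Implicit Types (S : {set V}) (u w : V).

Local Notation I := (diffset x y).
Local Notation pi := (pi (twist f T) J x y).

Let twist_nonexp : nonexpansive (twist f T). Proof. exact: nonexpansive_twist. Qed.

Lemma arc_flipset S u w : S \subset I -> u \in I -> arc f (flipset x S) u w = (w == pi u).
Proof.
move=> SI uI; have [arcs _] := arcs_flipset twist_nonexp xy_min SI uI.
by rewrite arcE -arcs twist_neq.
Qed.

(* Under the twist, moving [u] away from [x] moves [pi u] away from [x];
   undoing the twist at [pi u] gives the sign. *)
Lemma arc_neg_flipset S u : S \subset I -> u \in I ->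
  arc_neg f (flipset x S) u (pi u) = x u (+) x (pi u) (+) (pi u \in T).
Proof.
move=> SI uI; have [_ twist_pi] := arcs_flipset twist_nonexp xy_min SI uI.
have := arc_flipset (pi u) SI uI; rewrite eqxx => arc_u.
rewrite arc_negE //; move: arc_u twist_pi; rewrite arcE ffunE.
by case: (x u) => /=; case: (f _ (pi u)); case: (f _ (pi u)); case: (pi u \in T);
   case: (x (pi u)).
Qed.

Lemma chordless_cycle_flipset S : S \subset I ->
  has_chordless_cycle f (flipset x S) #|I| (odd #|I :&: T|).
Proof.
move=> SI; have [u uI] := set0Pn _ (diffset_neq0 xy_min).
have pi_inj := pi_inj twist_nonexp xy_min.
have orbitI : orbit pi u =i I.
  apply: orbit_irreducible uI; first by move=> v; apply: pi_in.
  exact: pi_irreducible.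
have uniq_orbit := orbit_uniq pi u.
have size_orbit : size (orbit pi u) == #|I|.
  by rewrite -(card_uniqP uniq_orbit); apply/eqP/eq_card.
apply/existsP; exists (Tuple size_orbit); rewrite /= chordless_cycle_orbit //; last first.
  by move=> v w; rewrite orbitI => vI; apply: arc_flipset.
rewrite /num_neg_arcs (eq_in_count (a2 := fun v => x v (+) x (next (orbit pi u) v)
                                      (+) (next (orbit pi u) v \in T))); last first.
  by move=> v vu; rewrite /= (nextE (cycle_orbit pi_inj u)) // arc_neg_flipset -?orbitI.
rewrite /= odd_count_next_addb // -size_filter -(card_uniqP (filter_uniq _ uniq_orbit)).
by apply/eqP; congr odd; apply: eq_card => v; rewrite /= mem_filter in_setI orbitI andbC.
Qed.

Lemma minimal_pair_cycle_bound_absurd :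
  (forall k, 1 <= k <= #|V| ->
     #|[set z | has_chordless_cycle f z k (odd #|I :&: T|)]| <= 2 ^ k - 1) -> False.
Proof.
move=> bound; have k_ge1 : 0 < #|I| by rewrite card_gt0 (diffset_neq0 xy_min).
have := bound #|I|; rewrite k_ge1 max_card => /(_ isT).
have := card_flipset_points
  (P := fun z => has_chordless_cycle f z #|I| (odd #|I :&: T|)) chordless_cycle_flipset.
have := expn_gt0 2 #|I|; lia.
Qed.

End TwistedMinimalPair.

Section Existence.
Variable V : finType.
Implicit Types (J : {set V}) (p z a b : point V) (h f : point V -> point V) (v : V).

Lemma exists_minimal_pair h J p v a0 a1 :
  subcube J p a0 -> subcube J p a1 -> fixed_on h J a0 -> fixed_on h J a1 -> a0 v != a1 v ->
  exists x y, v \in diffset x y /\ minimal_pair h J x y.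
Proof.
move=> a0J a1J ha0 ha1 a01.
pose good z := subcube J p z && fixed_on h J z.
pose P n := [exists q : point V * point V,
               [&& good q.1, good q.2, q.1 v != q.2 v & hamming q.1 q.2 == n]].
have exP : exists n, P n.
  exists (hamming a0 a1); apply/existsP; exists (a0, a1).
  by rewrite /good a0J a1J ha0 ha1 a01 eqxx.
case: (ex_minnP exP) => m /existsP[[x y] /and4P[/andP[xJ hx] /andP[yJ hy] /= xyv]].
move=> /eqP <-{m} minm.
have IJ := diffset_subcube xJ yJ.
exists x, y; split; first by rewrite inE.
split=> //; first by apply: contraNneq xyv => ->.
move=> S SI hS; have gS : good (flipset x S).
  by rewrite /good hS subcube_flipset // (subset_trans SI IJ).
have cardI : #|diffset x y| = #|S| + #|diffset x y :\: S|.
  by rewrite -(cardsID S) (setIidPr SI).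
case vS : (v \in S).
- right; apply/eqP; rewrite eqEcard SI /=.
  have : hamming x y <= hamming x (flipset x S).
    apply: minm; apply/existsP; exists (x, flipset x S).
    by rewrite /= gS /good xJ hx ffunE vS eqxx andbT; case: (x v).
  by rewrite !hammingE diffset_flipset.
- left; apply/eqP; rewrite -cards_eq0.
  have : hamming x y <= hamming (flipset x S) y.
    apply: minm; apply/existsP; exists (flipset x S, y).
    by rewrite /= gS /good yJ hy ffunE vS xyv eqxx.
  rewrite -{2}(flipset_diffset x y) hamming_flipset // hammingE cardI.
  by rewrite -{2}[#|_ :\: _|]add0n leq_add2r leqn0.
Qed.

Definition solvable_subcube f J p : bool :=
  [exists z, subcube J p z && fixed_on f J z].

Lemma exists_minimal_unsolvable_subcube f :
  (forall z, f z != z) ->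
  exists J p, ~~ solvable_subcube f J p /\
    forall J' p', #|J'| < #|J| -> solvable_subcube f J' p'.
Proof.
move=> nofix.
pose P n := [exists q : {set V} * point V, ~~ solvable_subcube f q.1 q.2 && (#|q.1| == n)].
have exP : exists n, P n.
  exists #|[set: V]|; apply/existsP; exists (setT, [ffun=> false]); rewrite eqxx andbT.
  by apply/existsP => -[z]; rewrite fixed_onT (negbTE (nofix z)) andbF.
case: (ex_minnP exP) => _ /existsP[[J p] /andP[unsolv /eqP <-]] minm.
exists J, p; split=> // J' p' ltJ; apply: contraTT ltJ => unsolv'; rewrite -leqNgt.
by apply: minm; apply/existsP; exists (J', p'); rewrite unsolv' eqxx.
Qed.

Lemma unsolvable_subcube_twist_point f J p v (b : bool) :
  ~~ solvable_subcube f J p -> solvable_subcube f (J :\ v) (flip p v b) -> v \in J ->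
  exists2 a, subcube J p a && fixed_on (twist f [set v]) J a & a v = b.
Proof.
move=> unsolv /existsP[a /andP[/subcubeP a_sub /fixed_onP a_fix]] vJ.
have av : a v = b by rewrite a_sub ?setD11 // ffunE eqxx.
have a_subJ : subcube J p a.
  apply/subcubeP => i iJ; have iv : i != v by apply: contraNneq iJ => ->.
  by rewrite a_sub ?inE ?(negbTE iJ) ?andbF // ffunE (negbTE iv).
have fav : f a v != a v.
  apply: contra unsolv => /eqP fav; apply/existsP; exists a; rewrite a_subJ /=.
  apply/fixed_onP => i iJ; case: (eqVneq i v) => [-> // | iv].
  by apply: a_fix; rewrite in_setD1 iv.
exists a => //; rewrite a_subJ /=; apply/fixed_onP => i iJ; rewrite ffunE inE.
case: (eqVneq i v) => [-> | iv]; first by move: fav; case: (f a v); case: (a v).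
by apply: a_fix; rewrite in_setD1 iv.
Qed.

Lemma minimal_pair_of_fixed_points f a b :
  f a = a -> f b = b -> a != b -> exists x y, minimal_pair (twist f set0) setT x y.
Proof.
move=> fa fb ab; have /set0Pn[v] : diffset a b != set0 by rewrite diffset_eq0.
rewrite inE => abv; have fixed z : f z = z -> fixed_on (twist f set0) setT z.
  by move=> fz; rewrite fixed_on_twist0 fixed_onT fz.
have [x [y [_ xy_min]]] := exists_minimal_pair (subcubeT a a) (subcubeT a b)
  (fixed _ fa) (fixed _ fb) abv.
by exists x, y.
Qed.

Lemma minimal_pair_of_fixpoint_free f :
  (forall z, f z != z) ->
  exists v J x y, v \in diffset x y /\ minimal_pair (twist f [set v]) J x y.
Proof.
move=> nofix; have [J [p [unsolv minJ]]] := exists_minimal_unsolvable_subcube nofix.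
have /set0Pn[v vJ] : J != set0.
  apply: contraNneq unsolv => ->; apply/existsP; exists p.
  by apply/andP; split; apply/forall_inP => i; rewrite ?inE.
have solv (b : bool) : solvable_subcube f (J :\ v) (flip p v b).
  by apply: minJ; rewrite (cardsD1 v J) vJ.
have [a0 /andP[a0J ha0] a0v] := unsolvable_subcube_twist_point unsolv (solv false) vJ.
have [a1 /andP[a1J ha1] a1v] := unsolvable_subcube_twist_point unsolv (solv true) vJ.
have a01 : a0 v != a1 v by rewrite a0v a1v.
have [x [y [vI xy_min]]] := exists_minimal_pair a0J a1J ha0 ha1 a01.
by exists v, J, x, y.
Qed.

End Existence.

Theorem corollary8 (V : finType) (f : point V -> point V) :
  0 < #|V| -> nonexpansive f ->
  ((forall k, 1 <= k <= #|V| ->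
      #|[set x : point V | has_chordless_pos_cycle f x k]| <= 2 ^ k - 1) ->
    #|[set x : point V | f x == x]| <= 1)
  /\
  ((forall k, 1 <= k <= #|V| ->
      #|[set x : point V | has_chordless_neg_cycle f x k]| <= 2 ^ k - 1) ->
    exists x : point V, f x = x).
Proof.
move=> _ f_nonexp; split=> bound.
- rewrite leqNgt; apply/negP => /card_gt1P[a [b [fa fb ab]]]; rewrite !inE in fa fb.
  have [x [y xy_min]] := minimal_pair_of_fixed_points (eqP fa) (eqP fb) ab.
  apply: (minimal_pair_cycle_bound_absurd f_nonexp xy_min) => k /bound.
  by rewrite setI0 cards0 chordless_pos_cycle_points.
- have [/existsP[z /eqP fz] | /existsPn nofix] := boolP [exists z, f z == z].
    by exists z.
  have [v [J [x [y [vI xy_min]]]]] := minimal_pair_of_fixpoint_free nofix.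
  exfalso; apply: (minimal_pair_cycle_bound_absurd f_nonexp xy_min) => k /bound.
  by rewrite (setIidPr _) ?sub1set // cards1 chordless_neg_cycle_points.
Qed.
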